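(* Let $\mathfrak g$ be an $8$-dimensional filiform Lie algebra with associated triple $(4,5,8)$, and let $\alpha_1,\alpha_2,\gamma_1,\gamma_2,\beta_{12},\beta_{22},\beta_{13},\beta_{23},\beta_{33}$ be its parameters with respect to an adapted basis $\{e_h\}$. Then $\alpha_1=0$, $\alpha_2=-\gamma_1$, $\gamma_2=-\tfrac52\beta_{12}$, $\gamma_1\ne0$; moreover $[C^3\mathfrak g,C^3\mathfrak g]=[C^3\mathfrak g,C^4\mathfrak g]=\langle e_2\rangle$, $[C^3\mathfrak g,C^5\mathfrak g]=\{0\}$, $[C^2\mathfrak g,C^2\mathfrak g]=[C^2\mathfrak g,C^3\mathfrak g]=\langle e_2,\beta_{12}e_3\rangle$, $[C^2\mathfrak g,C^4\mathfrak g]=[C^2\mathfrak g,C^5\mathfrak g]=\langle e_2\rangle$, $[C^2\mathfrak g,C^6\mathfrak g]=\{0\}$. Consequently $$\mathrm{HP}_{\mathfrak g}-\mathrm{HP}^{(0)}_{\mathfrak g}=c\,(t^2s^2+t^2s^3+t^3s^2)+(t^2s^4+t^3s^3+t^4s^2)+(t^2s^5+t^3s^4+t^4s^3+t^5s^2),$$ with $c=2$ if $\beta_{12}\ne0$ and $c=1$ if $\beta_{12}=0$; both cases occur, so $\mathrm{HP}$ separates two isomorphism classes of filiform Lie algebras with triple $(4,5,8)$.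
   Context: All Lie algebras are over $\mathbb C$; $C^1\mathfrak g=\mathfrak g$, $C^k\mathfrak g=[C^{k-1}\mathfrak g,\mathfrak g]$. A Lie algebra is filiform if $\dim\mathfrak g=n\ge2$ and $\dim C^k\mathfrak g=n-k$ for $2\le k\le n$. An adapted basis of a filiform $\mathfrak g$ is a basis $\{e_1,\dots,e_n\}$ with $[e_1,e_h]=e_{h-1}$ ($3\le h\le n$), $[e_2,e_h]=0$ ($1\le h\le n$), $[e_3,e_h]=0$ ($2\le h\le n$); then $C^k\mathfrak g=\langle e_2,\dots,e_{n-k+1}\rangle$. For non-model filiform $\mathfrak g$, $z_1=\min\{k\ge4:[e_k,e_n]\ne0\}$, $z_2=\min\{k\ge4:[e_k,e_{k+1}]\ne0\}$ (in any adapted basis) are invariants; $(z_1,z_2,n)$ is the associated triple. $P_h(u)$ is the $h$-th coordinate of $u$ in $\{e_h\}$. General law (known result) for triple $(z_1,z_2,n)$: there are complex numbers $\alpha_i$ ($1\le i\le z_2-z_1+1$), $\gamma_j$ ($1\le j\le n-z_2-1$), $\beta_{k\ell}$ ($2\le\ell\le n-z_2$, $1\le k<z_2-z_1+\ell$), the parameters, with $[e_1,e_h]=e_{h-1}$; $[e_{z_1+i},e_{z_2+1}]=\alpha_1e_{i+2}+\dots+\alpha_{i+1}e_2$ ($0\le i\le z_2-z_1$); $[e_{z_1},e_{z_2+j}]=\alpha_1e_{j+1}+\gamma_1e_j+\dots+\gamma_{j-1}e_2$ ($2\le j\le n-z_2$); $[e_{z_1+k},e_{z_2+\ell}]=\sum_{h=2}^{k+\ell}P_h([e_{z_1+k-1},e_{z_2+\ell}]+[e_{z_1+k},e_{z_2+\ell-1}])e_{h+1}+\beta_{k\ell}e_2$;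 all other brackets $[e_a,e_b]$, $2\le a<b$, zero. For $(4,5,8)$ the parameters are $\alpha_1,\alpha_2,\gamma_1,\gamma_2,\beta_{12},\beta_{22},\beta_{13},\beta_{23},\beta_{33}$. Hilbert polynomial: $\mathrm{HP}_{\mathfrak g}(t,s)=\sum_{k,\ell\ge1}\dim[C^k\mathfrak g,C^\ell\mathfrak g]\,t^ks^\ell$; $\mathrm{HP}^{(0)}_{\mathfrak g}=(n-2)ts+\sum_{2\le k\le n-2}(n-k-1)(t^ks+ts^k)$. *)

(* The ground field C is modelled as R[i] for R : realType
   (the complex numbers over an arbitrary model of the reals). *)
From HB Require Import structures.
From mathcomp Require Import all_boot all_order all_algebra.
From mathcomp.real_closed Require Export complex.
From mathcomp Require Export reals.
Set Implicit Arguments.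
Unset Strict Implicit.
Unset Printing Implicit Defensive.
Import GRing.Theory.
Local Open Scope ring_scope.

Section LieDefs.
Variables (F : fieldType) (V : vectType F).

Definition is_lie (br : V -> V -> V) : Prop :=
  [/\ (forall (a : F) x y z, br (a *: x + y) z = a *: br x z + br y z),
      (forall (a : F) x y z, br x (a *: y + z) = a *: br x y + br x z),
      (forall x, br x x = 0)
    & (forall x y z, br x (br y z) + br y (br z x) + br z (br x y) = 0)].

(* [U, W] : the subspace spanned by all brackets [u, w], u in U, w in W
   (by bilinearity, spanned by the brackets of basis vectors). *)
Definition brsp (br : V -> V -> V) (U W : {vspace V}) : {vspace V} :=
  <<[seq br u w | u <- vbasis U, w <- vbasis W]>>%VS.

Fixpoint lcs (br : V -> V -> V) (k : nat) : {vspace V} :=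
  match k with
  | 0 | 1 => fullv
  | k'.+1 => brsp br (lcs br k') fullv
  end.

Definition filiform (n : nat) (br : V -> V -> V) : Prop :=
  [/\ (2 <= n)%N, \dim (fullv : {vspace V}) = n &
      forall k, (2 <= k <= n)%N -> \dim (lcs br k) = (n - k)%N].

(* The basis e_1, ..., e_n, indexed by naturals 1..n. *)
Definition btuple (n : nat) (e : nat -> V) : n.-tuple V :=
  [tuple e i.+1 | i < n].

Definition adapted_basis (n : nat) (br : V -> V -> V) (e : nat -> V) : Prop :=
  [/\ basis_of fullv (btuple n e),
      (forall h, (3 <= h <= n)%N -> br (e 1%N) (e h) = e h.-1),
      (forall h, (1 <= h <= n)%N -> br (e 2%N) (e h) = 0)
    & (forall h, (2 <= h <= n)%N -> br (e 3%N) (e h) = 0)].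

Definition is_min_ge4 (P : nat -> Prop) (z : nat) : Prop :=
  [/\ (4 <= z)%N, P z & forall k, (4 <= k < z)%N -> ~ P k].

Definition assoc_triple (n : nat) (br : V -> V -> V) (e : nat -> V)
    (z1 z2 : nat) : Prop :=
  is_min_ge4 (fun k => br (e k) (e n) <> 0) z1 /\
  is_min_ge4 (fun k => br (e k) (e k.+1) <> 0) z2.

(* P_h(u): h-th coordinate of u in the basis e_1..e_n (0 if h is out of range). *)
Definition Pcoord (n : nat) (e : nat -> V) (h : nat) (u : V) : F :=
  \sum_(i < n | i.+1 == h) coord (btuple n e) i u.

(* The pairs (a,b) covered by the first three families of brackets of the law. *)
Definition law_listed (z1 z2 n a b : nat) : bool :=
  [|| (z1 <= a <= z2)%N && (b == z2 + 1)%N,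
      (a == z1) && (z2 + 2 <= b <= n)%N
    | [&& (z1 + 1 <= a)%N, (z2 + 2 <= b <= n)%N & (a - z1 < z2 - z1 + (b - z2))%N]].

Definition general_law (z1 z2 n : nat) (br : V -> V -> V) (e : nat -> V)
    (al ga : nat -> F) (be : nat -> nat -> F) : Prop :=
  [/\ (forall i, (i <= z2 - z1)%N ->
         br (e (z1 + i)%N) (e (z2 + 1)%N)
           = \sum_(0 <= m < i.+1) al m.+1 *: e (i + 2 - m)%N),
      (forall j, (2 <= j <= n - z2)%N ->
         br (e z1) (e (z2 + j)%N)
           = al 1%N *: e (j + 1)%N + \sum_(1 <= m < j) ga m *: e (j + 1 - m)%N),
      (forall k l, (2 <= l <= n - z2)%N -> (1 <= k < z2 - z1 + l)%N ->
         br (e (z1 + k)%N) (e (z2 + l)%N)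
           = \sum_(2 <= h < (k + l).+1)
                Pcoord n e h (br (e (z1 + k - 1)%N) (e (z2 + l)%N)
                              + br (e (z1 + k)%N) (e (z2 + l - 1)%N)) *: e h.+1
             + be k l *: e 2%N)
    & (forall a b, (2 <= a)%N -> (a < b)%N -> (b <= n)%N ->
         ~~ law_listed z1 z2 n a b -> br (e a) (e b) = 0)].

Definition has_parameters (z1 z2 n : nat) (br : V -> V -> V) (e : nat -> V)
    (al ga : nat -> F) (be : nat -> nat -> F) : Prop :=
  [/\ is_lie br, filiform n br, adapted_basis n br e,
      assoc_triple n br e z1 z2 & general_law z1 z2 n br e al ga be].

(* Coefficient of t^k s^l in HP_g = sum_{k,l>=1} dim [C^k g, C^l g] t^k s^l. *)
Definition HPcoef (br : V -> V -> V) (k l : nat) : int :=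
  if (1 <= k)%N && (1 <= l)%N then (\dim (brsp br (lcs br k) (lcs br l)))%:Z
  else 0.

End LieDefs.

(* Coefficient of t^k s^l in HP^(0) = (n-2) t s + sum_{2<=k<=n-2} (n-k-1)(t^k s + t s^k). *)
Definition HP0coef (n k l : nat) : int :=
  if (k == 1%N) && (l == 1%N) then (n - 2)%:Z
  else if (l == 1%N) && (2 <= k <= n - 2)%N then (n - k - 1)%:Z
  else if (k == 1%N) && (2 <= l <= n - 2)%N then (n - l - 1)%:Z
  else 0.

Definition mono (a b k l : nat) : int := ((k == a) && (l == b) : nat)%:Z.

Definition HPdiff458 (c : int) (k l : nat) : int :=
  c * (mono 2 2 k l + mono 2 3 k l + mono 3 2 k l)
  + (mono 2 4 k l + mono 3 3 k l + mono 4 2 k l)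
  + (mono 2 5 k l + mono 3 4 k l + mono 4 3 k l + mono 5 2 k l).

From HB Require Import structures.
From mathcomp Require Import all_boot all_order all_algebra.
From mathcomp.real_closed Require Import complex.
From mathcomp Require Import reals.
From mathcomp Require Import ring zify.
Import GRing.Theory Num.Theory.
Set Implicit Arguments.
Unset Strict Implicit.
Unset Printing Implicit Defensive.
Local Open Scope ring_scope.

(* In the general law for (4,5,8) the e2-coordinate of the Jacobi identity on
   (e4,e6,e8), (e5,e7,e8) and (e6,e7,e8) reads 6 al1^2 = 0,
   2 (al2 + ga1)^2 = 0 and ga1 (2 ga2 + 5 be12) = 0, while z2 = 5 forces
   [e5,e6] = - ga1 e2 <> 0.  Once these relations hold, the only nonzero
   brackets inside C^2 g = <e2,...,e7> are [e4,e7] = ga1 e2,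
   [e5,e6] = - ga1 e2, [e5,e7] = be12 e2 and [e6,e7] = be22 e2 + be12 e3,
   and every [C^k g, C^l g] can be read off.  Both values of c are realised by
   explicit structure constants on C^8 (be12 = 2 and be12 = 0), whose Jacobi
   identity is checked by computation. *)

Section LieBracket.
Variables (F : fieldType) (V : vectType F) (br : V -> V -> V).
Hypothesis br_lie : is_lie br.

Lemma brDl x y z : br (x + y) z = br x z + br y z.
Proof. by case: br_lie => brL _ _ _; have := brL 1 x y z; rewrite !scale1r. Qed.

Lemma brDr x y z : br z (x + y) = br z x + br z y.
Proof. by case: br_lie => _ brR _ _; have := brR 1 z x y; rewrite !scale1r. Qed.

Lemma br0l z : br 0 z = 0.
Proof. by apply: (addrI (br 0 z)); rewrite -brDl !addr0. Qed.

Lemma br0r z : br z 0 = 0.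
Proof. by apply: (addrI (br z 0)); rewrite -brDr !addr0. Qed.

Lemma brZl a x z : br (a *: x) z = a *: br x z.
Proof. by case: br_lie => brL _ _ _; rewrite -[a *: x]addr0 brL br0l addr0. Qed.

Lemma brZr a x z : br z (a *: x) = a *: br z x.
Proof. by case: br_lie => _ brR _ _; rewrite -[a *: x]addr0 brR br0r addr0. Qed.

Lemma brxx x : br x x = 0.
Proof. by case: br_lie. Qed.

Lemma brC x y : br y x = - br x y.
Proof.
have /eqP := brxx (x + y); rewrite brDl !brDr !brxx add0r addr0 addr_eq0.
by move=> /eqP ->; rewrite opprK.
Qed.

Lemma br_suml I r (P : pred I) (f : I -> V) z :
  br (\sum_(i <- r | P i) f i) z = \sum_(i <- r | P i) br (f i) z.
Proof. exact: (big_morph (br^~ z) (fun x y => brDl x y z) (br0l z)). Qed.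

Lemma br_sumr I r (P : pred I) (f : I -> V) z :
  br z (\sum_(i <- r | P i) f i) = \sum_(i <- r | P i) br z (f i).
Proof. exact: (big_morph (br z) (fun x y => brDr x y z) (br0r z)). Qed.

Lemma br_span_mem (X Y : seq V) (S : {vspace V}) :
  (forall x y, x \in X -> y \in Y -> br x y \in S) ->
  forall u w, u \in <<X>>%VS -> w \in <<Y>>%VS -> br u w \in S.
Proof.
move=> XY u w uX wY.
rewrite (coord_span (X := in_tuple X) uX) (coord_span (X := in_tuple Y) wY).
rewrite br_suml; apply: rpred_sum => i _; rewrite brZl br_sumr; apply: rpredZ.
by apply: rpred_sum => j _; rewrite brZr; apply/rpredZ/XY; apply: mem_nth.
Qed.

Lemma mem_brsp (U W : {vspace V}) u w :
  u \in U -> w \in W -> br u w \in brsp br U W.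
Proof.
rewrite -{1}(span_basis (vbasisP U)) -{1}(span_basis (vbasisP W)).
apply: br_span_mem => x y xU yW; apply/memv_span/allpairs_f => //.
Qed.

Lemma brsp_subP (U W S : {vspace V}) :
  (forall u w, u \in U -> w \in W -> br u w \in S) -> (brsp br U W <= S)%VS.
Proof.
move=> UW; apply/span_subvP => _ /allpairsP [[u w] [/= uU wW ->]].
by apply: UW; apply: vbasis_mem.
Qed.

Lemma brsp_span_sub (X Y : seq V) (S : {vspace V}) :
  (forall x y, x \in X -> y \in Y -> br x y \in S) ->
  (brsp br <<X>> <<Y>> <= S)%VS.
Proof. by move=> XY; apply: brsp_subP; apply: br_span_mem. Qed.

Lemma lcsSS k : lcs br k.+2 = brsp br (lcs br k.+1) fullv.
Proof. by []. Qed.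

Lemma brspC (U W : {vspace V}) : brsp br U W = brsp br W U.
Proof.
by apply/eqP; rewrite eqEsubv; apply/andP; split; apply: brsp_subP => u w uU wW;
  rewrite brC rpredN mem_brsp.
Qed.

Lemma brsp0l (W : {vspace V}) : brsp br 0 W = 0%VS.
Proof.
apply/eqP; rewrite -subv0; apply: brsp_subP => u w.
by rewrite memv0 => /eqP -> _; rewrite br0l mem0v.
Qed.

End LieBracket.

Definition lowspan (F : fieldType) (V : vectType F) (e : nat -> V) (m : nat) :
  {vspace V} := <<[seq e i | i <- iota 2 m]>>%VS.

Lemma btupleE (F : fieldType) (V : vectType F) (n : nat) (e : nat -> V) :
  btuple n e = [seq e i | i <- iota 1 n] :> seq V.
Proof.
apply: (@eq_from_nth _ 0); first by rewrite size_tuple size_map size_iota.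
move=> i; rewrite size_tuple => ltin.
rewrite (nth_map 0%N) ?size_iota // nth_iota // add1n.
by rewrite (_ : i = Ordinal ltin) // /btuple nth_mktuple.
Qed.

Section AdaptedBasis.
Variables (F : fieldType) (V : vectType F) (n : nat) (e : nat -> V).
Hypothesis e_basis : basis_of fullv (btuple n e).

Local Notation P := (Pcoord n e).

Lemma PcoordD h u v : P h (u + v) = P h u + P h v.
Proof. by rewrite /Pcoord -big_split; apply: eq_bigr => i _; rewrite linearD. Qed.

Lemma PcoordZ h a u : P h (a *: u) = a * P h u.
Proof. by rewrite /Pcoord mulr_sumr; apply: eq_bigr => i _; rewrite linearZ. Qed.

Lemma Pcoord0 h : P h 0 = 0.
Proof. by rewrite /Pcoord big1 // => i _; rewrite linear0. Qed.

Lemma PcoordN h u : P h (- u) = - P h u.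
Proof. by rewrite -scaleN1r PcoordZ mulN1r. Qed.

Lemma Pcoord_sum h I r (Q : pred I) (f : I -> V) :
  P h (\sum_(i <- r | Q i) f i) = \sum_(i <- r | Q i) P h (f i).
Proof. exact: (big_morph (P h) (PcoordD h) (Pcoord0 h)). Qed.

Lemma Pcoord_e h m : (1 <= m <= n)%N -> P h (e m) = (h == m)%:R.
Proof.
case: m => // m /andP [_ ltmn]; set o := Ordinal ltmn.
have free_e := basis_free e_basis.
have -> : e m.+1 = (btuple n e)`_o by rewrite /btuple nth_mktuple.
rewrite /Pcoord big_mkcond (bigD1 o) // big1 => [|i neqio].
  by rewrite coord_free // eqxx /= addr0 eq_sym; case: eqP.
by rewrite coord_free // [o == i]eq_sym (negPf neqio); case: eqP.
Qed.

Lemma Pcoord_expand v : v = \sum_(0 <= i < n) P i.+1 v *: e i.+1.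
Proof.
rewrite big_mkord {1}(coord_basis e_basis (memvf v)); apply: eq_bigr => i _.
by rewrite /btuple nth_mktuple /Pcoord (eq_bigl (pred1 i)) ?big_pred1_eq.
Qed.

Lemma Pcoord_inj u v : (forall m, (1 <= m <= n)%N -> P m u = P m v) -> u = v.
Proof.
move=> uv; rewrite (Pcoord_expand u) (Pcoord_expand v).
by apply: eq_big_nat => i /andP [_ ltin]; rewrite uv.
Qed.

Lemma e_neq0 m : (1 <= m <= n)%N -> e m != 0.
Proof.
move=> m_range; apply/eqP => em0; have := Pcoord_e m m_range.
by rewrite em0 Pcoord0 eqxx => /eqP; rewrite eq_sym oner_eq0.
Qed.

Local Notation Sp := (lowspan e).

Lemma dim_lowspan m : (m < n)%N -> \dim (Sp m) = m.
Proof.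
move=> ltmn; have := basis_free e_basis; rewrite btupleE.
have -> : iota 1 n = 1%N :: (iota 2 m ++ iota (2 + m) (n - m.+1)).
  by rewrite -iotaD; case: n ltmn => // n' ltmn'; rewrite /= subnKC.
rewrite map_cons -cat1s map_cat => /catr_free /catl_free.
by rewrite /free size_map size_iota => /eqP.
Qed.

Lemma mem_lowspan m i : (2 <= i < m.+2)%N -> e i \in Sp m.
Proof. by move=> i_range; apply/memv_span/map_f; rewrite mem_iota add2n. Qed.

Lemma lowspan_sub m (S : {vspace V}) :
  (forall i, (2 <= i < m.+2)%N -> e i \in S) -> (Sp m <= S)%VS.
Proof.
move=> eS; apply/span_subvP => x; case/mapP => i; rewrite mem_iota add2n.
by move=> i_range ->; apply: eS.
Qed.

Lemma lowspanS m1 m2 : (m1 <= m2)%N -> (Sp m1 <= Sp m2)%VS.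
Proof.
move=> lem; apply: lowspan_sub => i /andP [le2i ltim]; apply: mem_lowspan.
by rewrite le2i (leq_trans ltim).
Qed.

Lemma lowspan0 : Sp 0 = 0%VS.
Proof. by rewrite /lowspan span_nil. Qed.

Variable br : V -> V -> V.
Hypothesis br_lie : is_lie br.

Lemma Pcoord_br_expandr x w m :
  P m (br x w) = \sum_(0 <= i < n) P i.+1 w * P m (br x (e i.+1)).
Proof.
rewrite {1}(Pcoord_expand w) (br_sumr br_lie) Pcoord_sum.
by apply: eq_bigr => i _; rewrite (brZr br_lie) PcoordZ.
Qed.

Lemma Pcoord_jacobi a b c m :
  \sum_(0 <= i < n)
     (P i.+1 (br (e b) (e c)) * P m (br (e a) (e i.+1))
    + P i.+1 (br (e c) (e a)) * P m (br (e b) (e i.+1))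
    + P i.+1 (br (e a) (e b)) * P m (br (e c) (e i.+1))) = 0.
Proof.
case: br_lie => _ _ _ jacobi.
have := congr1 (P m) (jacobi (e a) (e b) (e c)).
by rewrite !PcoordD !Pcoord_br_expandr Pcoord0 -!big_split.
Qed.

Hypothesis br_e1 : forall h, (3 <= h <= n)%N -> br (e 1) (e h) = e h.-1.

Lemma lowspan_sub_lcs k : (Sp (n - 2 - k) <= lcs br k.+2)%VS.
Proof.
elim: k => [|k IHk]; apply: lowspan_sub => i /andP [le2i ltin].
  have -> : e i = br (e 1) (e i.+1) by rewrite br_e1 //; lia.
  exact: mem_brsp (memvf _) (memvf _).
have -> : e i = - br (e i.+1) (e 1) by rewrite (brC br_lie) opprK br_e1 //; lia.
rewrite rpredN (mem_brsp br_lie _ (memvf _)) //.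
by apply: (subvP IHk); apply: mem_lowspan; lia.
Qed.

Section FiliformCriterion.
Hypothesis br_lowspan :
  forall i j, (2 <= i <= n)%N -> (1 <= j <= n)%N -> br (e i) (e j) \in Sp i.-2.

Lemma br_e_lowspan i j :
  (1 <= i <= n)%N -> (1 <= j <= n)%N -> br (e i) (e j) \in Sp (n - 2).
Proof.
move=> i_range j_range; have [-> | neqi1] := eqVneq i 1%N.
  have [-> | neqj1] := eqVneq j 1%N; first by rewrite (brxx br_lie) mem0v.
  rewrite (brC br_lie) rpredN; apply: (subvP (lowspanS _)) (br_lowspan _ _) => //; lia.
by apply: (subvP (lowspanS _)) (br_lowspan _ _) => //; lia.
Qed.

Lemma lcs_sub_lowspan k : (lcs br k.+2 <= Sp (n - 2 - k))%VS.
Proof.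
have fullE : fullv = <<[seq e j | j <- iota 1 n]>>%VS.
  by rewrite -btupleE (span_basis e_basis).
elim: k => [|k IHk].
  rewrite subn0 /= fullE; apply: (brsp_span_sub br_lie) => x y.
  move=> /mapP [i + ->] /mapP [j + ->]; rewrite !mem_iota => i_range j_range.
  apply: br_e_lowspan; lia.
rewrite lcsSS; apply: brsp_subP => u w /(subvP IHk) uS; rewrite fullE => wV.
apply: (br_span_mem br_lie _ uS wV) => x y.
move=> /mapP [i + ->] /mapP [j + ->]; rewrite !mem_iota => i_range j_range.
by apply: (subvP (lowspanS _)) (br_lowspan _ _); lia.
Qed.

Lemma filiform_lowspan : (2 <= n)%N -> filiform n br.
Proof.
move=> le2n; split=> //; first by rewrite (size_basis e_basis).
move=> k /andP [le2k lekn]; have -> : k = (k - 2).+2 by lia.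
rewrite (_ : lcs br _ = Sp (n - 2 - (k - 2))) ?dim_lowspan; try lia.
by apply/eqP; rewrite eqEsubv lcs_sub_lowspan lowspan_sub_lcs.
Qed.

End FiliformCriterion.

Section Filiform.
Hypothesis br_filiform : filiform n br.

Lemma lcs_eq0 j : lcs br (n + j) = 0%VS.
Proof.
case: br_filiform => le2n _ dim_lcs; elim: j => [|j IHj].
  by apply/eqP; rewrite addn0 -dimv_eq0 dim_lcs ?subnn // le2n leqnn.
have -> : (n + j.+1 = (n + j - 1).+2)%N by lia.
by rewrite lcsSS (_ : (n + j - 1).+1 = n + j)%N ?IHj ?brsp0l //; lia.
Qed.

Lemma lcs_filiform k : lcs br k.+2 = Sp (n - 2 - k).
Proof.
have [lekn|ltnk] := leqP k (n - 2).
  case: br_filiform => le2n _ dim_lcs.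
  by apply/eqP; rewrite eq_sym eqEdim lowspan_sub_lcs dim_lcs ?dim_lowspan //; lia.
have -> : (k.+2 = n + (k.+2 - n))%N by lia.
by rewrite lcs_eq0 (_ : n - 2 - k = 0)%N ?lowspan0 //; lia.
Qed.

End Filiform.

End AdaptedBasis.

Ltac unroll_sums :=
  repeat first [ rewrite big_geq; last by [] | rewrite big_ltn; last by [] ].
Ltac Pcoord_simpl := rewrite ?(PcoordD, PcoordZ, PcoordN, Pcoord_sum, Pcoord0).
Ltac cases_1_8 := let m := fresh "m" in
  move=> m /andP []; move: m; case; first done;
  do 8! (case; first by move=> _ _ /=; ring); by move=> ? _.

Section Law458.
Variables (F : numFieldType) (V : vectType F) (br : V -> V -> V) (e : nat -> V)
  (al ga : nat -> F) (be : nat -> nat -> F).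
Hypothesis params : has_parameters 4 5 8 br e al ga be.

Let br_lie : is_lie br. Proof. by case: params. Qed.
Let adapted : adapted_basis 8 br e. Proof. by case: params. Qed.
Let triple : assoc_triple 8 br e 4 5. Proof. by case: params. Qed.
Let law : general_law 4 5 8 br e al ga be. Proof. by case: params. Qed.
Let e_basis : basis_of fullv (btuple 8 e). Proof. by case: adapted. Qed.
Let br_e1 h : (3 <= h <= 8)%N -> br (e 1) (e h) = e h.-1.
Proof. by case: adapted => _ E _ _; apply: E. Qed.
Let br_e2 h : (1 <= h <= 8)%N -> br (e 2) (e h) = 0.
Proof. by case: adapted => _ _ E _; apply: E. Qed.
Let br_unlisted a b : (2 <= a)%N -> (a < b)%N -> (b <= 8)%N ->
  ~~ law_listed 4 5 8 a b -> br (e a) (e b) = 0.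
Proof. by case: law => _ _ _ E; apply: E. Qed.

Local Notation P := (Pcoord 8 e).

Let law46 : br (e 4) (e 6) = \sum_(0 <= m < 1) al m.+1 *: e (0 + 2 - m)%N.
Proof. by case: law => L _ _ _; apply: (L 0%N). Qed.
Let law56 : br (e 5) (e 6) = \sum_(0 <= m < 2) al m.+1 *: e (1 + 2 - m)%N.
Proof. by case: law => L _ _ _; apply: (L 1%N). Qed.
Let law47 :
  br (e 4) (e 7) = al 1 *: e 3 + \sum_(1 <= m < 2) ga m *: e (2 + 1 - m)%N.
Proof. by case: law => _ L _ _; apply: (L 2%N). Qed.
Let law48 :
  br (e 4) (e 8) = al 1 *: e 4 + \sum_(1 <= m < 3) ga m *: e (3 + 1 - m)%N.
Proof. by case: law => _ L _ _; apply: (L 3%N). Qed.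
Let law57 : br (e 5) (e 7)
  = \sum_(2 <= h < 4) P h (br (e 4) (e 7) + br (e 5) (e 6)) *: e h.+1
    + be 1 2 *: e 2.
Proof. by case: law => _ _ L _; apply: (L 1%N 2%N). Qed.
Let law67 : br (e 6) (e 7)
  = \sum_(2 <= h < 5) P h (br (e 5) (e 7) + br (e 6) (e 6)) *: e h.+1
    + be 2 2 *: e 2.
Proof. by case: law => _ _ L _; apply: (L 2%N 2%N). Qed.
Let law58 : br (e 5) (e 8)
  = \sum_(2 <= h < 5) P h (br (e 4) (e 8) + br (e 5) (e 7)) *: e h.+1
    + be 1 3 *: e 2.
Proof. by case: law => _ _ L _; apply: (L 1%N 3%N). Qed.
Let law68 : br (e 6) (e 8)
  = \sum_(2 <= h < 6) P h (br (e 5) (e 8) + br (e 6) (e 7)) *: e h.+1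
    + be 2 3 *: e 2.
Proof. by case: law => _ _ L _; apply: (L 2%N 3%N). Qed.
Let law78 : br (e 7) (e 8)
  = \sum_(2 <= h < 7) P h (br (e 6) (e 8) + br (e 7) (e 7)) *: e h.+1
    + be 3 3 *: e 2.
Proof. by case: law => _ _ L _; apply: (L 3%N 3%N). Qed.

(* The recursion of the general law, unfolded. *)
Definition law_coef (a b m : nat) : F :=
  match a, b with
  | 1, 2 => 0
  | 1, _ => (m == b.-1)%:R
  | 4, 6 => al 1 * (m == 2)%:R
  | 5, 6 => al 1 * (m == 3)%:R + al 2 * (m == 2)%:R
  | 4, 7 => al 1 * (m == 3)%:R + ga 1 * (m == 2)%:R
  | 4, 8 => al 1 * (m == 4)%:R + ga 1 * (m == 3)%:R + ga 2 * (m == 2)%:R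
  | 5, 7 => be 1 2 * (m == 2)%:R + (ga 1 + al 2) * (m == 3)%:R
            + 2%:R * al 1 * (m == 4)%:R
  | 6, 7 => be 2 2 * (m == 2)%:R + be 1 2 * (m == 3)%:R
            + (ga 1 + al 2) * (m == 4)%:R + 2%:R * al 1 * (m == 5)%:R
  | 5, 8 => be 1 3 * (m == 2)%:R + (ga 2 + be 1 2) * (m == 3)%:R
            + (2%:R * ga 1 + al 2) * (m == 4)%:R + 3%:R * al 1 * (m == 5)%:R
  | 6, 8 => be 2 3 * (m == 2)%:R + (be 1 3 + be 2 2) * (m == 3)%:R
            + (ga 2 + 2%:R * be 1 2) * (m == 4)%:R
            + (3%:R * ga 1 + 2%:R * al 2) * (m == 5)%:R
            + 5%:R * al 1 * (m == 6)%:R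
  | 7, 8 => be 3 3 * (m == 2)%:R + be 2 3 * (m == 3)%:R
            + (be 1 3 + be 2 2) * (m == 4)%:R
            + (ga 2 + 2%:R * be 1 2) * (m == 5)%:R
            + (3%:R * ga 1 + 2%:R * al 2) * (m == 6)%:R
            + 5%:R * al 1 * (m == 7)%:R
  | _, _ => 0
  end.

Ltac coord_law L := rewrite L; Pcoord_simpl; unroll_sums;
  Pcoord_simpl; rewrite ?(brxx br_lie) ?Pcoord0.
Ltac coord_basis_cases m :=
  rewrite !(Pcoord_e e_basis) //; move: m; cases_1_8.

Lemma Pcoord_br46 m : (1 <= m <= 8)%N -> P m (br (e 4) (e 6)) = law_coef 4 6 m.
Proof. coord_law law46; coord_basis_cases m. Qed.
Lemma Pcoord_br56 m : (1 <= m <= 8)%N -> P m (br (e 5) (e 6)) = law_coef 5 6 m.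
Proof. coord_law law56; coord_basis_cases m. Qed.
Lemma Pcoord_br47 m : (1 <= m <= 8)%N -> P m (br (e 4) (e 7)) = law_coef 4 7 m.
Proof. coord_law law47; coord_basis_cases m. Qed.
Lemma Pcoord_br48 m : (1 <= m <= 8)%N -> P m (br (e 4) (e 8)) = law_coef 4 8 m.
Proof. coord_law law48; coord_basis_cases m. Qed.
Lemma Pcoord_br57 m : (1 <= m <= 8)%N -> P m (br (e 5) (e 7)) = law_coef 5 7 m.
Proof. coord_law law57; rewrite ?Pcoord_br47 ?Pcoord_br56 //; coord_basis_cases m. Qed.
Lemma Pcoord_br67 m : (1 <= m <= 8)%N -> P m (br (e 6) (e 7)) = law_coef 6 7 m.
Proof. coord_law law67; rewrite ?Pcoord_br57 //; coord_basis_cases m. Qed.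
Lemma Pcoord_br58 m : (1 <= m <= 8)%N -> P m (br (e 5) (e 8)) = law_coef 5 8 m.
Proof. coord_law law58; rewrite ?Pcoord_br48 ?Pcoord_br57 //; coord_basis_cases m. Qed.
Lemma Pcoord_br68 m : (1 <= m <= 8)%N -> P m (br (e 6) (e 8)) = law_coef 6 8 m.
Proof. coord_law law68; rewrite ?Pcoord_br58 ?Pcoord_br67 //; coord_basis_cases m. Qed.
Lemma Pcoord_br78 m : (1 <= m <= 8)%N -> P m (br (e 7) (e 8)) = law_coef 7 8 m.
Proof. coord_law law78; rewrite ?Pcoord_br68 //; coord_basis_cases m. Qed.

Lemma Pcoord_br_law a b m : (1 <= a)%N -> (a < b)%N -> (b <= 8)%N ->
  (1 <= m <= 8)%N -> P m (br (e a) (e b)) = law_coef a b m.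
Proof.
move=> + + + m_range.
case: a => [|[|[|[|[|[|[|[|a]]]]]]]] //; case: b => [|[|[|[|[|[|[|[|[|b]]]]]]]]] //.
all: move=> _ _ _; rewrite /law_coef.
all: first [ by rewrite (brC br_lie) br_e2 // oppr0 Pcoord0
           | by rewrite br_e1 // (Pcoord_e e_basis)
           | by rewrite br_unlisted // Pcoord0
           | by rewrite Pcoord_br46 | by rewrite Pcoord_br56 | by rewrite Pcoord_br47
           | by rewrite Pcoord_br48 | by rewrite Pcoord_br57 | by rewrite Pcoord_br67
           | by rewrite Pcoord_br58 | by rewrite Pcoord_br68 | by rewrite Pcoord_br78 ].
Qed.

Definition bracket_coef (a b m : nat) : F :=
  if (a < b)%N then law_coef a b m
  else if (b < a)%N then - law_coef b a m else 0.

Lemma Pcoord_br_coef a b m :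
  (1 <= a <= 8)%N -> (1 <= b <= 8)%N -> (1 <= m <= 8)%N ->
  P m (br (e a) (e b)) = bracket_coef a b m.
Proof.
move=> /andP [le1a lea8] /andP [le1b leb8] m_range; rewrite /bracket_coef.
case: (ltngtP a b) => [ltab | ltba | ->].
- by rewrite Pcoord_br_law.
- by rewrite (brC br_lie) PcoordN Pcoord_br_law.
- by rewrite (brxx br_lie) Pcoord0.
Qed.

Ltac jacobi_e2 a b c :=
  have := Pcoord_jacobi e_basis br_lie a b c 2; unroll_sums;
  rewrite !Pcoord_br_coef // /bracket_coef /law_coef /=.

Lemma al1_eq0 : al 1 = 0.
Proof.
jacobi_e2 4%N 6%N 8%N => J.
have /eqP : 6%:R * al 1 ^+ 2 = 0 by apply: etrans J; ring.
by rewrite mulf_eq0 pnatr_eq0 expf_eq0 /= => /eqP.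
Qed.

Lemma al2_eq : al 2 = - ga 1.
Proof.
jacobi_e2 5%N 7%N 8%N; rewrite al1_eq0 => J.
have /eqP : 2%:R * (al 2 + ga 1) ^+ 2 = 0 by apply: etrans J; ring.
by rewrite mulf_eq0 pnatr_eq0 expf_eq0 /= addr_eq0 => /eqP.
Qed.

Lemma ga1_neq0 : ga 1 != 0.
Proof.
apply/eqP => ga1_0; case: triple => _ [_ br56_neq0 _]; apply: br56_neq0.
apply: (Pcoord_inj e_basis) => m m_range.
by rewrite Pcoord_br56 // Pcoord0 /law_coef al1_eq0 al2_eq ga1_0; ring.
Qed.

Lemma ga2_eq : ga 2 = - (5%:R / 2%:R) * be 1 2.
Proof.
jacobi_e2 6%N 7%N 8%N; rewrite al1_eq0 al2_eq => J.
have /eqP : ga 1 * (2%:R * ga 2 + 5%:R * be 1 2) = 0 by apply: etrans J; ring.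
rewrite mulf_eq0 (negPf ga1_neq0) /= addr_eq0 => /eqP ga2E.
have two_neq0 : 2%:R != 0 :> F by rewrite pnatr_eq0.
by apply: (mulfI two_neq0); rewrite ga2E; field.
Qed.

Local Notation Sp := (lowspan e).
Local Notation span2 := (<<[:: e 2; be 1 2 *: e 3]>>%VS).

Lemma lcs458 k : lcs br k.+2 = Sp (6 - k).
Proof.
case: params => _ fil _ _ _; rewrite (lcs_filiform e_basis br_lie br_e1 fil).
by congr (Sp _); lia.
Qed.

Ltac cases_C2 := let i := fresh "i" in let j := fresh "j" in move=> i j;
  case: i => [|[|[|[|[|[|[|[|i]]]]]]]] //; case: j => [|[|[|[|[|[|[|[|j]]]]]]]] //.

Lemma br_C2 i j : (2 <= i <= 7)%N -> (2 <= j <= 7)%N ->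
  br (e i) (e j) = bracket_coef i j 2 *: e 2 + bracket_coef i j 3 *: e 3.
Proof.
move: i j; cases_C2 => i_range j_range.
all: apply: (Pcoord_inj e_basis) => m m_range.
all: rewrite Pcoord_br_coef // PcoordD !PcoordZ !(Pcoord_e e_basis) //.
all: rewrite /bracket_coef /law_coef /= ?al1_eq0 ?al2_eq; move: m m_range; cases_1_8.
Qed.

Lemma e23_comb_eq0 c d : c = 0 -> d = 0 -> c *: e 2 + d *: e 3 = 0.
Proof. by move=> -> ->; rewrite !scale0r addr0. Qed.

Lemma e23_comb_line c d : d = 0 -> c *: e 2 + d *: e 3 \in <[e 2]>%VS.
Proof. by move=> ->; rewrite scale0r addr0 memvZ // memv_line. Qed.

Lemma e23_comb_span2 c d k : d = k * be 1 2 -> c *: e 2 + d *: e 3 \in span2.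
Proof.
move=> ->; rewrite -scalerA; apply: rpredD; apply/rpredZ/memv_span.
  by rewrite mem_head.
by rewrite mem_seq2 eqxx orbT.
Qed.

Ltac C2_cases i j := move: i j; cases_C2 => i_range j_range;
  rewrite br_C2 // /bracket_coef /law_coef /= ?al1_eq0 ?al2_eq.

Lemma br_C2_eq0 i j : (2 <= i <= 7)%N -> (2 <= j <= 7)%N -> (i + j <= 10)%N ->
  br (e i) (e j) = 0.
Proof. C2_cases i j => ij_small; apply: e23_comb_eq0; ring. Qed.

Lemma br_C2_line i j : (2 <= i <= 7)%N -> (2 <= j <= 7)%N -> (i + j <= 12)%N ->
  br (e i) (e j) \in <[e 2]>%VS.
Proof. C2_cases i j => ij_small; apply: e23_comb_line; ring. Qed.

Lemma br_C2_span2 i j :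
  (2 <= i <= 7)%N -> (2 <= j <= 7)%N -> br (e i) (e j) \in span2.
Proof.
C2_cases i j.
all: first [ apply: (@e23_comb_span2 _ _ 0); ring
           | apply: (@e23_comb_span2 _ _ 1); ring
           | apply: (@e23_comb_span2 _ _ (-1)); ring ].
Qed.

Lemma e23_comb_e2 c d c' : c = c' -> d = 0 -> c *: e 2 + d *: e 3 = c' *: e 2.
Proof. by move=> -> ->; rewrite scale0r addr0. Qed.

Ltac br_C2_value := rewrite br_C2 // /bracket_coef /law_coef /= ?al1_eq0 ?al2_eq.

Lemma br_e47 : br (e 4) (e 7) = ga 1 *: e 2.
Proof. by br_C2_value; apply: e23_comb_e2; ring. Qed.

Lemma br_e56 : br (e 5) (e 6) = - ga 1 *: e 2.
Proof. by br_C2_value; apply: e23_comb_e2; ring. Qed.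

Lemma br_e67 : br (e 6) (e 7) = be 2 2 *: e 2 + be 1 2 *: e 3.
Proof. by br_C2_value; congr (_ *: _ + _ *: _); ring. Qed.

Lemma mem_brsp_pair (U W : {vspace V}) i j :
  (e i \in U /\ e j \in W) \/ (e j \in U /\ e i \in W) ->
  br (e i) (e j) \in brsp br U W.
Proof.
case=> [[iU jW] | [jU iW]]; first exact: mem_brsp.
by rewrite (brC br_lie) -rpredN opprK mem_brsp.
Qed.

Lemma e2_mem_brsp (U W : {vspace V}) i j c :
  br (e i) (e j) = c *: e 2 -> c != 0 ->
  (e i \in U /\ e j \in W) \/ (e j \in U /\ e i \in W) -> e 2 \in brsp br U W.
Proof.
move=> ij_e2 c_neq0 /mem_brsp_pair; rewrite ij_e2 => /(rpredZ c^-1).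
by rewrite scalerA mulVf // scale1r.
Qed.

Lemma be12e3_mem_brsp (U W : {vspace V}) : e 2 \in brsp br U W ->
  (e 6 \in U /\ e 7 \in W) \/ (e 7 \in U /\ e 6 \in W) ->
  be 1 2 *: e 3 \in brsp br U W.
Proof.
move=> e2_mem /mem_brsp_pair; rewrite br_e67 => e67_mem.
by rewrite -(addKr (be 2 2 *: e 2) (be 1 2 *: e 3)) rpredD ?rpredN ?rpredZ.
Qed.

Lemma dim_line_e2 : \dim <[e 2]> = 1%N.
Proof. by rewrite dim_vline (e_neq0 e_basis). Qed.

Lemma span2_sub (S : {vspace V}) :
  e 2 \in S -> be 1 2 *: e 3 \in S -> (span2 <= S)%VS.
Proof. by move=> e2S e3S; apply/span_subvP => x; rewrite mem_seq2 => /orP [] /eqP ->. Qed.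

Lemma line_e2_sub (S : {vspace V}) : e 2 \in S -> (<[e 2]> <= S)%VS.
Proof.
by move=> e2S; rewrite -span_seq1; apply/span_subvP => x; rewrite mem_seq1 => /eqP ->.
Qed.

Lemma e2_mem_span2 : e 2 \in span2.
Proof. by rewrite memv_span ?mem_head. Qed.

Lemma dim_span2 : \dim span2 = if be 1 2 == 0 then 1%N else 2%N.
Proof.
have [be12_0 | be12_neq0] := eqVneq (be 1 2) 0.
  apply: etrans dim_line_e2; congr (\dim _); apply/eqP; rewrite eqEsubv.
  by rewrite span2_sub ?line_e2_sub ?e2_mem_span2 ?memv_line // be12_0 scale0r mem0v.
apply: etrans (dim_lowspan e_basis (m := 2) _) => //.
congr (\dim _); apply/eqP.
rewrite eqEsubv span2_sub ?rpredZ ?mem_lowspan //=.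
apply: lowspan_sub => i /andP [le2i lti4].
have [-> | ->] : i = 2%N \/ i = 3%N by lia.
  exact: e2_mem_span2.
suff: be 1 2 *: e 3 \in span2 by move/(rpredZ (be 1 2)^-1); rewrite scalerK.
by rewrite memv_span // mem_seq2 eqxx orbT.
Qed.

Ltac lowspan_pairs := apply: (brsp_span_sub br_lie) => x y;
  move=> /mapP [i + ->] /mapP [j + ->]; rewrite !mem_iota => i_range j_range.

Lemma brsp_lowspan_eq0 a b : (a <= 6)%N -> (b <= 6)%N -> (a + b <= 8)%N ->
  brsp br (Sp a) (Sp b) = 0%VS.
Proof.
move=> lea6 leb6 leab8; apply/eqP; rewrite -subv0; lowspan_pairs.
by rewrite br_C2_eq0 ?mem0v //; lia.
Qed.

Lemma brsp_lowspan_sub_line a b : (a <= 6)%N -> (b <= 6)%N -> (a + b <= 10)%N ->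
  (brsp br (Sp a) (Sp b) <= <[e 2]>)%VS.
Proof. by move=> lea6 leb6 leab10; lowspan_pairs; apply: br_C2_line; lia. Qed.

Lemma brsp_lowspan_sub_span2 a b : (a <= 6)%N -> (b <= 6)%N ->
  (brsp br (Sp a) (Sp b) <= span2)%VS.
Proof. by move=> lea6 leb6; lowspan_pairs; apply: br_C2_span2; lia. Qed.

(* [e_(a+1), e_(10-a)] = +- ga1 e2 is the witness. *)
Lemma e2_mem_brsp_lowspan a b : (a <= 6)%N -> (b <= 6)%N -> (9 <= a + b)%N ->
  e 2 \in brsp br (Sp a) (Sp b).
Proof.
move=> lea6 leb6 le9ab; have nga1_neq0 : - ga 1 != 0 by rewrite oppr_eq0 ga1_neq0.
have [a3 | [a4 | [a5 | a6]]] : a = 3%N \/ a = 4%N \/ a = 5%N \/ a = 6%N by lia.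
- by apply: (e2_mem_brsp br_e47 ga1_neq0); left; rewrite !mem_lowspan //; lia.
- by apply: (e2_mem_brsp br_e56 nga1_neq0); left; rewrite !mem_lowspan //; lia.
- by apply: (e2_mem_brsp br_e56 nga1_neq0); right; rewrite !mem_lowspan //; lia.
- by apply: (e2_mem_brsp br_e47 ga1_neq0); right; rewrite !mem_lowspan //; lia.
Qed.

Lemma brsp_lowspan_line a b : (a <= 6)%N -> (b <= 6)%N -> (9 <= a + b <= 10)%N ->
  brsp br (Sp a) (Sp b) = <[e 2]>%VS.
Proof.
move=> lea6 leb6 /andP [le9ab leab10]; apply/eqP.
by rewrite eqEsubv brsp_lowspan_sub_line ?line_e2_sub ?e2_mem_brsp_lowspan.
Qed.

Lemma brsp_lowspan_span2 a b : (a <= 6)%N -> (b <= 6)%N -> (11 <= a + b)%N ->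
  brsp br (Sp a) (Sp b) = span2.
Proof.
move=> lea6 leb6 le11ab; apply/eqP; rewrite eqEsubv brsp_lowspan_sub_span2 //=.
have e2_mem := e2_mem_brsp_lowspan lea6 leb6 (leq_trans (isT : 9 <= 11)%N le11ab).
apply: span2_sub => //; apply: be12e3_mem_brsp => //.
have [le6a | lta6] := leqP 6 a; [right | left]; rewrite !mem_lowspan //; lia.
Qed.

Lemma dim_brsp_lcs k l : \dim (brsp br (lcs br k.+2) (lcs br l.+2))
  = if (8 <= k.+2 + l.+2)%N then 0%N
    else if (k.+2 + l.+2 <= 5)%N then \dim span2 else 1%N.
Proof.
rewrite !lcs458; case: (leqP 8 (k.+2 + l.+2)) => [le8kl | ltkl8].
  by rewrite brsp_lowspan_eq0 ?dimv0 //; lia.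
case: (leqP (k.+2 + l.+2) 5) => [lekl5 | lt5kl].
  by rewrite brsp_lowspan_span2 //; lia.
by rewrite brsp_lowspan_line ?dim_line_e2 //; lia.
Qed.

Lemma dim_lcs458 k : \dim (lcs br k.+2) = (6 - k)%N.
Proof. by rewrite lcs458 (dim_lowspan e_basis) //; lia. Qed.

(* The coefficients of HP_g, where c = dim [C^2 g, C^2 g]. *)
Definition HPcoef458 (c k l : nat) : nat :=
  (if (k == 0) || (l == 0) then 0
   else if k == 1 then 7 - l else if l == 1 then 7 - k
   else if 8 <= k + l then 0 else if k + l <= 5 then c else 1)%N.

Lemma HPcoef458E k l : HPcoef br k l = (HPcoef458 (\dim span2) k l)%:Z.
Proof.
have HPcoefSS k' l' :
    HPcoef br k'.+1 l'.+1 = (\dim (brsp br (lcs br k'.+1) (lcs br l'.+1)))%:Z.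
  by [].
case: k => [|[|k]]; case: l => [|[|l]] //; rewrite HPcoefSS /HPcoef458 [RHS]/=.
- by rewrite -lcsSS dim_lcs458.
- by rewrite (brspC br_lie) -lcsSS dim_lcs458.
- by rewrite -lcsSS dim_lcs458.
- by rewrite dim_brsp_lcs.
Qed.

Lemma HP_sub_HP0 k l : HPcoef br k l - HP0coef 8 k l
  = HPdiff458 (if be 1 2 == 0 then 1 else 2) k l.
Proof.
rewrite HPcoef458E dim_span2; case: (be 1 2 == 0).
all: case: k => [|[|[|[|[|[|[|[|k]]]]]]]]; case: l => [|[|[|[|[|[|[|[|l]]]]]]]].
all: by rewrite /HP0coef /HPdiff458 /mono /HPcoef458 /=.
Qed.

End Law458.

Section StructureConstants.
Variables (F : numFieldType) (n : nat) (C : nat -> nat -> nat -> int).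

(* Structure constants are indexed from 1, as the basis e_1, ..., e_n. *)
Local Notation K a b m := ((C a.+1 b.+1 m.+1)%:~R : F).

Definition sc_form (x y : 'I_n -> F) (m : 'I_n) : F :=
  \sum_a \sum_b x a * y b * K a b m.

Definition sc_br (x y : 'rV[F]_n) : 'rV[F]_n := \row_m sc_form (x 0) (y 0) m.

Definition erow (i : nat) : 'rV[F]_n := \row_j ((j : nat) == i.-1)%:R.

Lemma sc_form_ext x x' y y' m :
  x =1 x' -> y =1 y' -> sc_form x y m = sc_form x' y' m.
Proof. by move=> xx' yy'; apply: eq_bigr => a _; apply: eq_bigr => b _; rewrite xx' yy'. Qed.

Lemma sc_formDl k x x' y m :
  sc_form (fun i => k * x i + x' i) y m = k * sc_form x y m + sc_form x' y m.
Proof.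
rewrite /sc_form mulr_sumr -big_split; apply: eq_bigr => a _.
by rewrite mulr_sumr -big_split; apply: eq_bigr => b _ /=; ring.
Qed.

Lemma sc_formDr k x y y' m :
  sc_form x (fun i => k * y i + y' i) m = k * sc_form x y m + sc_form x y' m.
Proof.
rewrite /sc_form mulr_sumr -big_split; apply: eq_bigr => a _.
by rewrite mulr_sumr -big_split; apply: eq_bigr => b _ /=; ring.
Qed.

Lemma sum_delta (f : 'I_n -> F) (i : 'I_n) :
  \sum_(j : 'I_n) ((j : nat) == i)%:R * f j = f i.
Proof.
rewrite (bigD1 i) //= eqxx mul1r big1 ?addr0 // => j neqji.
by rewrite (_ : (j : nat) == i = false) ?mul0r //; apply/negbTE.
Qed.

Lemma sc_form_delta (i j : 'I_n) m :
  sc_form (fun a => ((a : nat) == i)%:R) (fun b => ((b : nat) == j)%:R) m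
  = (C i.+1 j.+1 m.+1)%:~R.
Proof.
rewrite /sc_form (eq_bigr (fun a : 'I_n => ((a : nat) == i)%:R
    * \sum_(b : 'I_n) ((b : nat) == j)%:R * (C a.+1 b.+1 m.+1)%:~R)).
  by rewrite sum_delta sum_delta.
by move=> a _; rewrite mulr_sumr; apply: eq_bigr => b _; ring.
Qed.

Lemma erow_expand (v : 'rV[F]_n) : v = \sum_(i < n) v 0 i *: erow i.+1.
Proof.
apply/rowP => j; rewrite summxE (eq_bigr (fun i : 'I_n => ((i : nat) == j)%:R * v 0 i)).
  by rewrite sum_delta.
by move=> i _; rewrite !mxE /= eq_sym mulrC.
Qed.

Lemma erow_basis : basis_of fullv (btuple n erow).
Proof.
rewrite basisEdim size_tuple; apply/andP; split; last by rewrite dimvf /dim /= mul1n.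
apply/subvP => v _; rewrite (erow_expand v); apply: rpred_sum => i _.
apply/rpredZ/memv_span; rewrite btupleE map_f // mem_iota.
by have := ltn_ord i; lia.
Qed.

Lemma sc_br_erow a b : (1 <= a <= n)%N -> (1 <= b <= n)%N ->
  sc_br (erow a) (erow b) = \sum_(0 <= m < n) (C a b m.+1)%:~R *: erow m.+1.
Proof.
case: a => // a /andP [_ ltan]; case: b => // b /andP [_ ltbn].
apply/rowP => j; rewrite mxE summxE.
rewrite (@sc_form_ext _ (fun i => ((i : nat) == Ordinal ltan)%:R) _
  (fun i => ((i : nat) == Ordinal ltbn)%:R)) => [|i|i]; try by rewrite mxE.
rewrite sc_form_delta big_mkord (eq_bigr (fun m : 'I_n =>
  ((m : nat) == j)%:R * (C a.+1 b.+1 m.+1)%:~R)) ?sum_delta // => m _.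
by rewrite !mxE /= eq_sym mulrC.
Qed.

Lemma Pcoord_sc_br a b h :
  (1 <= a <= n)%N -> (1 <= b <= n)%N -> (1 <= h <= n)%N ->
  Pcoord n erow h (sc_br (erow a) (erow b)) = (C a b h)%:~R.
Proof.
move=> a_range b_range; case: h => // h /andP [_ lthn].
rewrite sc_br_erow // Pcoord_sum big_mkord.
rewrite (eq_bigr (fun m : 'I_n => ((m : nat) == Ordinal lthn)%:R * (C a b m.+1)%:~R)).
  by rewrite sum_delta.
by move=> m _; rewrite PcoordZ (Pcoord_e erow_basis) ?ltn_ord // eqSS eq_sym mulrC.
Qed.

Hypothesis C_alt : forall a b m, C b a m = - C a b m.

Lemma sc_form_alt x m : sc_form x x m = 0.
Proof.
have /eqP : sc_form x x m *+ 2 = 0.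
  rewrite mulr2n {1}/sc_form exchange_big -/(sc_form x x m) /sc_form -big_split.
  apply: big1 => a _; rewrite -big_split; apply: big1 => b _ /=.
  by rewrite C_alt intrN; ring.
by rewrite mulrn_eq0 => /eqP.
Qed.

Hypothesis C_jacobi : forall a c d m,
  (a < n)%N -> (c < n)%N -> (d < n)%N -> (m < n)%N ->
  \sum_(0 <= i < n) (C c.+1 d.+1 i.+1 * C a.+1 i.+1 m.+1
                   + C d.+1 a.+1 i.+1 * C c.+1 i.+1 m.+1
                   + C a.+1 c.+1 i.+1 * C d.+1 i.+1 m.+1) = 0.

Lemma K_jacobi (a c d m : 'I_n) :
  \sum_(b : 'I_n) (K c d b * K a b m + K d a b * K c b m + K a c b * K d b m) = 0.
Proof.
have := C_jacobi (ltn_ord a) (ltn_ord c) (ltn_ord d) (ltn_ord m).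
rewrite big_mkord => /(congr1 (fun z : int => z%:~R : F)).
rewrite rmorph_sum rmorph0 => J; apply: eq_trans J.
by apply: eq_bigr => b _; rewrite !rmorphD !rmorphM.
Qed.

Lemma sc_form_expand x y z m : sc_form x (sc_form y z) m =
  \sum_a \sum_c \sum_d x a * y c * z d * (\sum_(b : 'I_n) K c d b * K a b m).
Proof.
rewrite /sc_form; apply: eq_bigr => a _.
rewrite (eq_bigr (fun b : 'I_n => \sum_c \sum_d x a * y c * z d * (K c d b * K a b m))).
  rewrite exchange_big; apply: eq_bigr => c _; rewrite exchange_big.
  by apply: eq_bigr => d _; rewrite mulr_sumr.
move=> b _; rewrite mulr_sumr mulr_suml; apply: eq_bigr => c _.
by rewrite mulr_sumr mulr_suml; apply: eq_bigr => d _; ring.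
Qed.

Lemma sc_form_jacobi x y z m :
  sc_form x (sc_form y z) m + sc_form y (sc_form z x) m + sc_form z (sc_form x y) m = 0.
Proof.
have yzx : sc_form y (sc_form z x) m =
    \sum_a \sum_c \sum_d x a * y c * z d * (\sum_(b : 'I_n) K d a b * K c b m).
  rewrite sc_form_expand (eq_bigr _ (fun _ _ => exchange_big _ _ _ _ _ _)) exchange_big.
  by apply: eq_bigr => a _; apply: eq_bigr => c _; apply: eq_bigr => d _; ring.
have zxy : sc_form z (sc_form x y) m =
    \sum_a \sum_c \sum_d x a * y c * z d * (\sum_(b : 'I_n) K a c b * K d b m).
  rewrite sc_form_expand exchange_big (eq_bigr _ (fun _ _ => exchange_big _ _ _ _ _ _)).
  by apply: eq_bigr => a _; apply: eq_bigr => c _; apply: eq_bigr => d _; ring.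
rewrite yzx zxy sc_form_expand -!big_split; apply: big1 => a _.
rewrite -!big_split; apply: big1 => c _; rewrite -!big_split /=; apply: big1 => d _.
by rewrite -!mulrDr -!big_split /= K_jacobi mulr0.
Qed.

Lemma sc_br_lie : is_lie sc_br.
Proof.
split=> [k x y z | k x y z | x | x y z]; apply/rowP => m; rewrite !mxE.
- by rewrite -sc_formDl; apply: sc_form_ext => // i; rewrite !mxE.
- by rewrite -sc_formDr; apply: sc_form_ext => // i; rewrite !mxE.
- exact: sc_form_alt.
- rewrite -(sc_form_jacobi (x 0) (y 0) (z 0) m).
  by congr (_ + _ + _); apply: sc_form_ext => // i; rewrite mxE.
Qed.

End StructureConstants.

(* The brackets [e_a, e_b], a < b, of two algebras with triple (4,5,8): the
   parameters are al2 = -1, ga1 = 1 and, when t = true, be12 = 2, ga2 = -5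
   (all others vanish). *)
Definition model_law_coef (t : bool) (a b m : nat) : int :=
  match a, b, m with
  | 1, _, _ => if (3 <= b)%N && (m == b.-1) then 1 else 0
  | 4, 7, 2 => 1
  | 4, 8, 3 => 1
  | 4, 8, 2 => if t then -5 else 0
  | 5, 6, 2 => -1
  | 5, 7, 2 => if t then 2 else 0
  | 5, 8, 3 => if t then -3 else 0
  | 5, 8, 4 => 1
  | 6, 7, 3 => if t then 2 else 0
  | 6, 8, 4 => if t then -1 else 0
  | 6, 8, 5 => 1
  | 7, 8, 5 => if t then -1 else 0
  | 7, 8, 6 => 1
  | _, _, _ => 0
  end.

Definition model_coef (t : bool) (a b m : nat) : int :=
  if (a < b)%N then model_law_coef t a b m
  else if (b < a)%N then - model_law_coef t b a m else 0.

Definition model_jacobi_check (t : bool) : bool :=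
  let C := model_coef t in
  all (fun a => all (fun c => all (fun d => all (fun m =>
    foldr (fun i s => C c.+1 d.+1 i.+1 * C a.+1 i.+1 m.+1
                      + C d.+1 a.+1 i.+1 * C c.+1 i.+1 m.+1
                      + C a.+1 c.+1 i.+1 * C d.+1 i.+1 m.+1 + s) 0 (iota 0 8) == 0)
  (iota 0 8)) (iota 0 8)) (iota 0 8)) (iota 0 8).

Definition model_support_check (t : bool) : bool :=
  all (fun i => all (fun j => all (fun m =>
    (model_coef t i j m == 0) || (2 <= m <= i.-1)%N) (iota 1 8)) (iota 1 8)) (iota 2 7).

Lemma model_checks t : model_jacobi_check t && model_support_check t.
Proof. by case: t; vm_compute. Qed.

Lemma model_coef_alt t a b m : model_coef t b a m = - model_coef t a b m.
Proof. by rewrite /model_coef; case: (ltngtP a b); rewrite ?opprK ?oppr0. Qed.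

Lemma model_coef_jacobi t a c d m :
  (a < 8)%N -> (c < 8)%N -> (d < 8)%N -> (m < 8)%N ->
  \sum_(0 <= i < 8) (model_coef t c.+1 d.+1 i.+1 * model_coef t a.+1 i.+1 m.+1
                   + model_coef t d.+1 a.+1 i.+1 * model_coef t c.+1 i.+1 m.+1
                   + model_coef t a.+1 c.+1 i.+1 * model_coef t d.+1 i.+1 m.+1) = 0.
Proof.
have mem_iota8 i : (i < 8)%N -> i \in iota 0 8 by rewrite mem_iota.
move=> /mem_iota8 a8 /mem_iota8 c8 /mem_iota8 d8 /mem_iota8 m8.
case/andP: (model_checks t) => /allP/(_ a a8)/allP/(_ c c8)/allP/(_ d d8)/allP/(_ m m8).
by move=> /eqP J _; apply: eq_trans _ J; rewrite unlock.
Qed.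

Lemma model_coef_support t i j m :
  (2 <= i <= 8)%N -> (1 <= j <= 8)%N -> (1 <= m <= 8)%N ->
  (model_coef t i j m == 0) || (2 <= m <= i.-1)%N.
Proof.
move=> i_range j_range m_range; case/andP: (model_checks t) => _ /allP support.
have := support i; rewrite mem_iota => /(_ ltac:(lia)) /allP /(_ j).
rewrite mem_iota => /(_ ltac:(lia)) /allP /(_ m).
by rewrite mem_iota => /(_ ltac:(lia)).
Qed.

Ltac model_coord_cases t := let m := fresh "m" in
  move=> m /andP []; move: m; case; first done;
  do 8! (case; first by move=> _ _; rewrite /model_coef /model_law_coef /=;
                         case: t => /=; ring);
  by move=> ? _.

Section Model.
Variables (F : numFieldType) (t : bool).

Local Notation mbr := (@sc_br F 8 (model_coef t)).
Local Notation me := (erow F 8).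
Local Notation P := (Pcoord 8 me).

Definition model_al (i : nat) : F := if i == 2%N then -1 else 0.
Definition model_ga (j : nat) : F :=
  if j == 1%N then 1 else if (j == 2%N) && t then -5 else 0.
Definition model_be (k l : nat) : F := if [&& k == 1%N, l == 2%N & t] then 2 else 0.

Let me_basis := erow_basis F 8.
Let mbr_lie : is_lie mbr := sc_br_lie F (@model_coef_alt t) (@model_coef_jacobi t).

Lemma model_br_e1 h : (3 <= h <= 8)%N -> mbr (me 1) (me h) = me h.-1.
Proof.
move=> h_range; apply: (Pcoord_inj me_basis) => m m_range.
rewrite Pcoord_sc_br // ?(Pcoord_e me_basis) //; try lia.
move: h h_range m m_range; do 3! (case; first done).
do 6! (case; first by move=> _; model_coord_cases t).
by move=> ? /andP [].
Qed.

Lemma model_br_e2 h : (1 <= h <= 8)%N -> mbr (me 2) (me h) = 0.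
Proof.
move=> h_range; apply: (Pcoord_inj me_basis) => m m_range.
rewrite Pcoord_sc_br // Pcoord0; move: h h_range m m_range; case; first done.
do 8! (case; first by move=> _; model_coord_cases t).
by move=> ? /andP [].
Qed.

Lemma model_br_e3 h : (2 <= h <= 8)%N -> mbr (me 3) (me h) = 0.
Proof.
move=> h_range; apply: (Pcoord_inj me_basis) => m m_range.
rewrite Pcoord_sc_br ?Pcoord0 //; last lia.
move: h h_range m m_range; do 2! (case; first done).
do 7! (case; first by move=> _; model_coord_cases t).
by move=> ? /andP [].
Qed.

Lemma model_br_lowspan i j : (2 <= i <= 8)%N -> (1 <= j <= 8)%N ->
  mbr (me i) (me j) \in lowspan me i.-2.
Proof.
move=> i_range j_range; rewrite (Pcoord_expand me_basis (mbr _ _)) big_mkord.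
apply: rpred_sum => m _; have m_range : (1 <= m.+1 <= 8)%N by rewrite ltn_ord.
rewrite Pcoord_sc_br //; last lia.
have /orP [/eqP -> | m_low] := model_coef_support t i_range j_range m_range.
  by rewrite scale0r mem0v.
by apply/rpredZ/mem_lowspan; lia.
Qed.

Lemma model_filiform : filiform 8 mbr.
Proof. exact: (filiform_lowspan me_basis mbr_lie model_br_e1 model_br_lowspan isT). Qed.

Lemma model_adapted : adapted_basis 8 mbr me.
Proof.
by split; [exact: me_basis | exact: model_br_e1 | exact: model_br_e2 | exact: model_br_e3].
Qed.

Lemma model_triple : assoc_triple 8 mbr me 4 5.
Proof.
split; split => //.
- by move/(congr1 (P 3)); rewrite Pcoord0 Pcoord_sc_br // => /eqP; rewrite intr_eq0.
- by move=> k k_range; lia.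
- by move/(congr1 (P 2)); rewrite Pcoord0 Pcoord_sc_br // => /eqP; rewrite intr_eq0.
move=> k k_range; have -> : k = 4%N by lia.
apply; apply: (Pcoord_inj me_basis) => m m_range.
rewrite Pcoord0 Pcoord_sc_br //; move: m m_range; model_coord_cases t.
Qed.

Ltac model_law_coords := let m := fresh "m" in let m_range := fresh "m_range" in
  apply: (@Pcoord_inj _ _ 8 me me_basis) => m m_range;
  rewrite Pcoord_sc_br //; Pcoord_simpl; unroll_sums; Pcoord_simpl;
  rewrite ?Pcoord_sc_br // ?(Pcoord_e me_basis) // /model_al /model_ga /model_be;
  move: m m_range; model_coord_cases t.

Lemma model_law : general_law 4 5 8 mbr me model_al model_ga model_be.
Proof.
split.
- move=> i i_range; have [-> | ->] : i = 0%N \/ i = 1%N by lia.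
  + by model_law_coords.
  + by model_law_coords.
- move=> j j_range; have [-> | ->] : j = 2%N \/ j = 3%N by lia.
  + by model_law_coords.
  + by model_law_coords.
- move=> k l l_range k_range.
  have [[-> ->] | [[-> ->] | [[-> ->] | [[-> ->] | [-> ->]]]]] :
    (k = 1 /\ l = 2 \/ k = 2 /\ l = 2 \/ k = 1 /\ l = 3 \/ k = 2 /\ l = 3
     \/ k = 3 /\ l = 3)%N by lia.
  + by model_law_coords.
  + by model_law_coords.
  + by model_law_coords.
  + by model_law_coords.
  + by model_law_coords.
- move=> a b le2a ltab leb8 unlisted; apply: (Pcoord_inj me_basis) => m m_range.
  rewrite Pcoord0 Pcoord_sc_br //; try lia.
  move: a b le2a ltab leb8 unlisted m m_range.
  case=> [|[|[|[|[|[|[|[|a]]]]]]]] //; case=> [|[|[|[|[|[|[|[|[|b]]]]]]]]] //.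
  all: move=> _ _ _ _; model_coord_cases t.
Qed.

Lemma model_parameters : has_parameters 4 5 8 mbr me model_al model_ga model_be.
Proof.
split; [exact: mbr_lie | exact: model_filiform | exact: model_adapted
       | exact: model_triple | exact: model_law].
Qed.

End Model.

Theorem mainTheorem17 (R : realType) :
  (forall (V : vectType R[i]) (br : V -> V -> V) (e : nat -> V)
          (al ga : nat -> R[i]) (be : nat -> nat -> R[i]),
     has_parameters 4 5 8 br e al ga be ->
     [/\ [/\ al 1%N = 0, al 2%N = - ga 1%N,
             ga 2%N = - (5%:R / 2%:R) * be 1%N 2%N & ga 1%N != 0],
         [/\ brsp br (lcs br 3) (lcs br 3) = <[e 2%N]>%VS,
             brsp br (lcs br 3) (lcs br 4) = <[e 2%N]>%VS,
             brsp br (lcs br 3) (lcs br 5) = 0%VS,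
             brsp br (lcs br 2) (lcs br 2) = <<[:: e 2%N; be 1%N 2%N *: e 3%N]>>%VS
           & brsp br (lcs br 2) (lcs br 3) = <<[:: e 2%N; be 1%N 2%N *: e 3%N]>>%VS],
         [/\ brsp br (lcs br 2) (lcs br 4) = <[e 2%N]>%VS,
             brsp br (lcs br 2) (lcs br 5) = <[e 2%N]>%VS
           & brsp br (lcs br 2) (lcs br 6) = 0%VS]
       & forall k l : nat,
           HPcoef br k l - HP0coef 8 k l
             = HPdiff458 (if be 1%N 2%N == 0 then 1 else 2) k l])
  /\ (exists (V : vectType R[i]) (br : V -> V -> V) (e : nat -> V)
             (al ga : nat -> R[i]) (be : nat -> nat -> R[i]),
        has_parameters 4 5 8 br e al ga be /\ be 1%N 2%N != 0)
  /\ (exists (V : vectType R[i]) (br : V -> V -> V) (e : nat -> V)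
             (al ga : nat -> R[i]) (be : nat -> nat -> R[i]),
        has_parameters 4 5 8 br e al ga be /\ be 1%N 2%N = 0).
Proof.
split.
  move=> V br e al ga be params; rewrite !(lcs458 params).
  split; last exact: HP_sub_HP0 params.
  - split; [exact: al1_eq0 params | exact: al2_eq params
           | exact: ga2_eq params | exact: ga1_neq0 params].
  - by split; [ rewrite (brsp_lowspan_line params) | rewrite (brsp_lowspan_line params)
               | rewrite (brsp_lowspan_eq0 params) | rewrite (brsp_lowspan_span2 params)
               | rewrite (brsp_lowspan_span2 params) ].
  - by split; [ rewrite (brsp_lowspan_line params) | rewrite (brsp_lowspan_line params)
               | rewrite (brsp_lowspan_eq0 params) ].
split.
  exists _, (sc_br (model_coef true)), (erow R[i] 8), (model_al R[i]),
    (model_ga R[i] true), (model_be R[i] true).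
  by split; [exact: model_parameters | rewrite /model_be /= pnatr_eq0].
exists _, (sc_br (model_coef false)), (erow R[i] 8), (model_al R[i]),
  (model_ga R[i] false), (model_be R[i] false).
by split; [exact: model_parameters | rewrite /model_be].
Qed.
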